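(* Let $n,m$ be integers with $n-|m|$ even and non-negative, and define the radial Zernike polynomial $R_n^{|m|}(r)=r^{|m|}\,P^{(0,|m|)}_{\frac{n-|m|}{2}}(2r^2-1)$ for $0\le r\le 1$. Then for every integer $k\ge 0$, \[ \max_{0\le r\le 1}\bigl|(R_n^{|m|})^{(k)}(r)\bigr|\;\le\;\frac{n^2(n^2-1^2)\cdots(n^2-(k-1)^2)}{2^k\,(1/2)_k}, \] where the right-hand side is interpreted as $1$ when $k=0$.
   Context: $P_p^{(\alpha,\beta)}$ denotes the Jacobi polynomial of degree $p$ orthogonal with respect to the weight $(1-x)^\alpha(1+x)^\beta$ on $[-1,1]$, with the standard normalization $P_p^{(\alpha,\beta)}(1)=\binom{p+\alpha}{p}$. $f^{(k)}$ denotes the $k$-th derivative of $f$. $(\alpha)_0=1$ and $(\alpha)_k=\alpha(\alpha+1)\cdots(\alpha+k-1)$ for $k\ge1$ (Pochhammer symbol). *)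

From mathcomp Require Import all_boot all_order all_algebra.
Set Implicit Arguments. Unset Strict Implicit. Unset Printing Implicit Defensive.
Import Order.TTheory GRing.Theory Num.Theory.
Local Open Scope ring_scope.

(* It satisfies P_p^{(a,b)}(1) = C(p+a, p). *)
Definition jacobi (R : fieldType) (a b p : nat) : {poly R} :=
  \sum_(s < p.+1)
     (('C(p + a, p - s) * 'C(p + b, s))%:R / 2 ^+ p)
       *: (('X - 1) ^+ s * ('X + 1) ^+ (p - s)).

Definition zernikeR (R : fieldType) (n m : int) : {poly R} :=
  'X ^+ absz m *
  (jacobi R 0 (absz m) ((absz (n - `|m|)) %/ 2) \Po (2%:P * 'X ^+ 2 - 1)).

Definition pochhammer (R : ringType) (x : R) (k : nat) : R :=
  \prod_(i < k) (x + i%:R).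

(* Put x = cos t and N = |m| + 2p.  Then 2^N R_n^m(x) is the real part of
   e^(-iNt) W(e^(2it)) for an explicit polynomial W whose coefficients are
   nonnegative (the a-th one is C(N,a)/C(N,p) times the square of a Krawtchouk
   value) and add up to W(1) = 2^N.  So R_n^m is a convex
   combination of the Chebyshev polynomials T_|2a-N|, a <= N.  Every derivative of
   T_j is a nonnegative combination of Chebyshev polynomials, hence is bounded on
   [-1,1] by its value at 1, and the Chebyshev differential equation evaluates
   T_j^(k)(1) to the product of the statement with n = j, which increases with j. *)

From HB Require Import structures.
From mathcomp Require Import all_boot all_order all_algebra.
From mathcomp Require Import polyXY.
From mathcomp Require Import ring lra zify.
Import Order.TTheory GRing.Theory Num.Theory.
Local Open Scope ring_scope.

Section Chebyshev.
Context {R : comNzRingType}.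

(* [chebU n] is the classical U_(n-1), so that [T_n' = n U_n] below. *)
Fixpoint chebTU (n : nat) : {poly R} * {poly R} :=
  if n is n'.+1 then
    ('X * (chebTU n').1 + ('X ^+ 2 - 1) * (chebTU n').2,
     (chebTU n').1 + 'X * (chebTU n').2)
  else (1, 0).

Definition chebT n := (chebTU n).1.
Definition chebU n := (chebTU n).2.

Lemma chebT0 : chebT 0 = 1. Proof. by []. Qed.
Lemma chebU0 : chebU 0 = 0. Proof. by []. Qed.
Lemma chebTS n : chebT n.+1 = 'X * chebT n + ('X ^+ 2 - 1) * chebU n.
Proof. by []. Qed.
Lemma chebUS n : chebU n.+1 = chebT n + 'X * chebU n. Proof. by []. Qed.

Lemma chebT_rec n : chebT n.+2 = 'X * chebT n.+1 *+ 2 - chebT n.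
Proof. rewrite /chebT /chebU /=; ring. Qed.

Lemma chebU_rec n : chebU n.+2 = 'X * chebU n.+1 *+ 2 - chebU n.
Proof. rewrite /chebT /chebU /=; ring. Qed.

Lemma chebU_recT n : chebU n.+2 = chebU n + chebT n.+1 *+ 2.
Proof. rewrite /chebT /chebU /=; ring. Qed.

Arguments chebT : simpl never.
Arguments chebU : simpl never.

Lemma deriv_chebT n : (chebT n)^`() = chebU n *+ n.
Proof.
elim/ltn_ind: n => -[|[|n]] IH.
- by rewrite chebT0 derivC.
- by rewrite chebTS chebT0 chebU0 mulr0 addr0 mulr1 derivX chebUS chebT0 chebU0 mulr0 addr0.
- rewrite chebT_rec derivB derivMn derivM derivX mul1r !IH //.
  by rewrite chebU_rec !chebTS !chebUS; ring.
Qed.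

Lemma chebU_deriv n : ('X ^+ 2 - 1) * (chebU n)^`() = chebT n *+ n - 'X * chebU n.
Proof.
elim: n => [|n IH]; first by rewrite chebU0 deriv0 mulr0 chebT0 mulr0 subr0.
rewrite chebUS derivD derivM derivX mul1r deriv_chebT chebTS.
have -> : ('X ^+ 2 - 1) * (chebU n *+ n + (chebU n + 'X * (chebU n)^`())) =
   ('X ^+ 2 - 1) * (chebU n *+ n.+1) + 'X * (('X ^+ 2 - 1) * (chebU n)^`()) by ring.
rewrite IH; ring.
Qed.

Lemma chebyshev_ode_derivn (f : {poly R}) (c : nat) :
  ('X ^+ 2 - 1) * f^`(2) + 'X * f^`(1) = f *+ c ->
  forall k, ('X ^+ 2 - 1) * f^`(k.+2) + 'X * f^`(k.+1) *+ k.*2.+1 + f^`(k) *+ (k * k)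
     = f^`(k) *+ c.
Proof.
move=> ode; elim=> [|k IH]; first by rewrite mulr1n mulr0n addr0.
have := congr1 (@deriv R) IH.
rewrite !derivD !derivMn !derivM derivB derivX derivC subr0 mul1r -!derivnS derivXn /=.
have -> : (k.+1 * k.+1 = k * k + k.*2.+1)%N by rewrite -addnn; lia.
have -> : (k.+1.*2.+1 = k.*2.+1 + 2)%N by rewrite -!addnn; lia.
move=> <-; rewrite expr2; ring.
Qed.

Lemma chebT_ode n k :
  ('X ^+ 2 - 1) * (chebT n)^`(k.+2) + 'X * (chebT n)^`(k.+1) *+ k.*2.+1
    + (chebT n)^`(k) *+ (k * k) = (chebT n)^`(k) *+ (n * n).
Proof.
apply: chebyshev_ode_derivn.
by rewrite derivSn !derivn1 deriv_chebT derivMn mulrnAr chebU_deriv; ring.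
Qed.

Lemma horner_chebT1 n : (chebT n).[1] = 1.
Proof.
by elim: n => [|n IH]; rewrite ?chebT0 ?hornerC // chebTS !hornerE IH; ring.
Qed.

Lemma chebT_pell n : chebT n ^+ 2 - ('X ^+ 2 - 1) * chebU n ^+ 2 = 1.
Proof.
elim: n => [|n IH]; first by rewrite chebT0 chebU0; ring.
by rewrite chebTS chebUS -[RHS]IH; ring.
Qed.

Definition chebTz (z : int) : {poly R} := chebT (absz z).

Lemma chebTz_rec z : chebTz (z + 1) + chebTz (z - 1) = 'X * chebTz z *+ 2.
Proof.
rewrite /chebTz; case: z => [[|n]|n].
- by rewrite /= chebTS chebT0 chebU0; ring.
- have -> : absz (n.+1%:Z + 1) = n.+2 by lia.
  have -> : absz (n.+1%:Z - 1) = n by lia.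
  by rewrite chebT_rec; ring.
- have -> : absz (Negz n + 1) = n by lia.
  have -> : absz (Negz n - 1) = n.+2 by lia.
  by rewrite chebT_rec; ring.
Qed.

Lemma chebTz_rec2 z : chebTz (z + 2) + chebTz (z - 2) = ('X ^+ 2 *+ 4 - 2) * chebTz z.
Proof.
have recS w : chebTz (w + 1) = 'X * chebTz w *+ 2 - chebTz (w - 1).
  by rewrite -chebTz_rec addrK.
have recP w : chebTz (w - 1) = 'X * chebTz w *+ 2 - chebTz (w + 1).
  by rewrite -chebTz_rec [RHS]addrC addKr.
have -> : z + 2 = z + 1 + 1 by rewrite -addrA.
have -> : z - 2 = z - 1 - 1 by rewrite -addrA -opprD.
by rewrite recS addrK recP subrK recS; ring.
Qed.

(* With x = cos t and z = exp(i t), [cheb_fold N P] evaluates at x to the real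
   part of z^-N P(z^2): multiplying P by X + 1 multiplies this by z + 1/z = 2x,
   and multiplying P by (X - 1)^2 multiplies it by (z - 1/z)^2 = 4(x^2 - 1). *)
Definition cheb_fold (N : nat) (P : {poly R}) : {poly R} :=
  \sum_(i < size P) P`_i *: chebTz (i.*2%:Z - N%:Z).

Lemma cheb_fold_widen N (P : {poly R}) B : (size P <= B)%N ->
  cheb_fold N P = \sum_(i < B) P`_i *: chebTz (i.*2%:Z - N%:Z).
Proof.
move=> leB; rewrite /cheb_fold (big_ord_widen B (fun i => P`_i *: chebTz (i.*2%:Z - N%:Z)) leB).
rewrite big_mkcond; apply: eq_bigr => i _.
by case: ltnP => // le_i; rewrite nth_default ?scale0r.
Qed.

Lemma cheb_foldD N : {morph cheb_fold N : P Q / P + Q}.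
Proof.
move=> P Q; set B := maxn (size P) (size Q).
rewrite !(cheb_fold_widen N _ B) ?leq_maxl ?leq_maxr ?size_polyD //.
by rewrite -big_split; apply: eq_bigr => i _; rewrite coefD scalerDl.
Qed.

Lemma cheb_foldZ N : scalable (cheb_fold N).
Proof.
move=> c P; rewrite (cheb_fold_widen N _ (size P)) ?size_scale_leq //.
by rewrite scaler_sumr; apply: eq_bigr => i _; rewrite coefZ scalerA.
Qed.

HB.instance Definition _ N :=
  GRing.isSemilinear.Build R {poly R} {poly R} _ (cheb_fold N)
    (cheb_foldZ N, cheb_foldD N).

Lemma cheb_foldXn N i : cheb_fold N 'X^i = chebTz (i.*2%:Z - N%:Z).
Proof.
rewrite /cheb_fold size_polyXn big_ord_recr big1 /= ?coefXn ?eqxx ?scale1r ?add0r //.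
by move=> j _; rewrite coefXn (ltn_eqF (ltn_ord j)) scale0r.
Qed.

Lemma cheb_fold_mull N N' G H :
  (forall i, cheb_fold N' (G * 'X^i) = H * cheb_fold N 'X^i) ->
  forall P, cheb_fold N' (G * P) = H * cheb_fold N P.
Proof.
move=> onXn P; rewrite -[P]coefK poly_def mulr_sumr !linear_sum mulr_sumr.
by apply: eq_bigr => i _; rewrite -scalerAr !linearZ /= onXn scalerAr.
Qed.

Lemma cheb_fold_mulXaddl N P :
  cheb_fold N.+1 (('X + 1) * P) = 'X *+ 2 * cheb_fold N P.
Proof.
apply: cheb_fold_mull => i; rewrite mulrDl mul1r -exprS linearD /= !cheb_foldXn.
have -> : i.+1.*2%:Z - N.+1%:Z = (i.*2%:Z - N%:Z) + 1 by lia.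
have -> : i.*2%:Z - N.+1%:Z = (i.*2%:Z - N%:Z) - 1 by lia.
by rewrite chebTz_rec mulrnAl.
Qed.

Lemma cheb_fold_mulXsub2l N P :
  cheb_fold N.+2 (('X - 1) ^+ 2 * P) = ('X ^+ 2 - 1) *+ 4 * cheb_fold N P.
Proof.
apply: cheb_fold_mull => i.
have -> : ('X - 1) ^+ 2 * 'X^i = 'X^(i.+2) - 'X^(i.+1) *+ 2 + 'X^i :> {poly R}.
  by rewrite !exprS; ring.
rewrite !(linearD, linearN, linearB, linearMn) /= !cheb_foldXn.
have -> : i.+2.*2%:Z - N.+2%:Z = (i.*2%:Z - N%:Z) + 2 by lia.
have -> : i.+1.*2%:Z - N.+2%:Z = i.*2%:Z - N%:Z by lia.
have -> : i.*2%:Z - N.+2%:Z = (i.*2%:Z - N%:Z) - 2 by lia.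
have := chebTz_rec2 (i.*2%:Z - N%:Z).
set z := i.*2%:Z - N%:Z => rec2; rewrite addrAC rec2; ring.
Qed.

Lemma cheb_fold_pow a b :
  cheb_fold (a + b.*2)%N (('X + 1) ^+ a * ('X - 1) ^+ b.*2)
    = ('X *+ 2) ^+ a * (('X ^+ 2 - 1) *+ 4) ^+ b.
Proof.
elim: a => [|a IH].
  rewrite !expr0 !mul1r add0n; elim: b => [|b IHb].
    by have := cheb_foldXn 0 0; rewrite expr0.
  by rewrite doubleS exprS exprS mulrA -expr2 cheb_fold_mulXsub2l IHb [in RHS]exprS.
by rewrite addSn exprS -mulrA cheb_fold_mulXaddl IH [in RHS]exprS mulrA.
Qed.

End Chebyshev.

Section ChebyshevBounds.
Variable R : realFieldType.
Implicit Types (P Q : {poly R}) (x : R).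

Lemma chebT_bound n x : -1 <= x <= 1 -> `|(chebT n).[x]| <= 1.
Proof.
move=> /andP[ge_x le_x].
have := congr1 (fun p : {poly R} => p.[x]) (chebT_pell n).
rewrite !(hornerD, hornerN, horner_exp, hornerM, hornerX, hornerC).
set t := (chebT n).[x]; set u := (chebU n).[x] => pell.
have : 0 <= (1 - x ^+ 2) * u ^+ 2 by apply: mulr_ge0; [nra | exact: sqr_ge0].
by rewrite ler_norml => Uu_ge0; apply/andP; split; nra.
Qed.

Definition markov (n k : nat) : R :=
  (\prod_(i < k) (n%:R ^+ 2 - i%:R ^+ 2)) / \prod_(i < k) (i.*2.+1)%:R.

Lemma horner_derivn_chebT1 n k : ((chebT n)^`(k)).[1] = markov n k.
Proof.
elim: k => [|k IH]; first by rewrite derivn0 horner_chebT1 /markov !big_ord0 divr1.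
have := congr1 (fun p : {poly R} => p.[1]) (chebT_ode n k).
rewrite !hornerE !hornerMn !hornerE expr1n subrr mul0r add0r IH => ode1.
have nz_k : (k.*2.+1)%:R != 0 :> R by rewrite pnatr_eq0.
have -> : ((chebT n)^`(k.+1)).[1] = markov n k * (n%:R ^+ 2 - k%:R ^+ 2) / (k.*2.+1)%:R.
  rewrite -[_ *+ k.*2.+1]mulr_natr -[_ *+ (k * k)]mulr_natr in ode1.
  rewrite -[_ *+ (n * n)]mulr_natr !natrM -!expr2 in ode1.
  by apply: (mulIf nz_k); rewrite mulfVK // mulrBr -ode1; ring.
by rewrite /markov !big_ord_recr /= invfM; ring.
Qed.

Inductive chebcone : {poly R} -> Prop :=
  | chebcone0 : chebcone 0
  | chebcone_chebT n : chebcone (chebT n)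
  | chebconeD P Q : chebcone P -> chebcone Q -> chebcone (P + Q)
  | chebconeZ c P : 0 <= c -> chebcone P -> chebcone (c *: P).

Lemma chebconeMn P j : chebcone P -> chebcone (P *+ j).
Proof. by move=> coneP; rewrite -scaler_nat; apply: chebconeZ. Qed.

Lemma chebcone_chebU n : chebcone (chebU n).
Proof.
elim/ltn_ind: n => -[|[|n]] IH; first exact: chebcone0.
  by rewrite chebUS chebU0 mulr0 addr0; apply: chebcone_chebT.
by rewrite chebU_recT; apply: chebconeD; [apply: IH | apply/chebconeMn/chebcone_chebT].
Qed.

Lemma chebcone_deriv P : chebcone P -> chebcone P^`().
Proof.
elim=> [|n|{}P Q _ coneP _ coneQ|c {}P c_ge0 _ coneP].
- by rewrite deriv0; apply: chebcone0.
- by rewrite deriv_chebT; apply/chebconeMn/chebcone_chebU.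
- by rewrite derivD; apply: chebconeD.
- by rewrite derivZ; apply: chebconeZ.
Qed.

Lemma chebcone_derivn P k : chebcone P -> chebcone P^`(k).
Proof.
by move=> coneP; elim: k => [|k IH]; rewrite ?derivn0 // derivnS; apply: chebcone_deriv.
Qed.

Lemma chebcone_horner_le P x : -1 <= x <= 1 -> chebcone P -> `|P.[x]| <= P.[1].
Proof.
move=> x_in; elim=> [|n|{}P Q _ leP _ leQ|c {}P c_ge0 _ leP].
- by rewrite !hornerE normr0.
- by rewrite horner_chebT1; apply: chebT_bound.
- by rewrite !hornerE; apply: le_trans (ler_normD _ _) (lerD _ _).
- by rewrite !hornerE normrM ger0_norm // ler_wpM2l.
Qed.

Lemma derivn_chebT_bound n k x : -1 <= x <= 1 -> `|((chebT n)^`(k)).[x]| <= markov n k.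
Proof.
move=> x_in; rewrite -horner_derivn_chebT1.
by apply: chebcone_horner_le => //; apply/chebcone_derivn/chebcone_chebT.
Qed.

Lemma markov_eq0 n k : (n < k)%N -> markov n k = 0.
Proof. by move=> lt_nk; rewrite /markov (bigD1 (Ordinal lt_nk)) //= subrr !mul0r. Qed.

Lemma markov_factor_ge0 n k (i : 'I_k) : (k <= n)%N -> 0 <= n%:R ^+ 2 - i%:R ^+ 2 :> R.
Proof.
move=> le_kn; rewrite subr_ge0 -!natrX ler_nat leq_sqr.
exact: ltnW (leq_trans (ltn_ord i) le_kn).
Qed.

Lemma markov_ge0 n k : 0 <= markov n k.
Proof.
have [/markov_eq0 -> // | le_kn] := ltnP n k.
apply: divr_ge0; first by apply: prodr_ge0 => i _; apply: markov_factor_ge0.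
by apply: prodr_ge0 => i _; rewrite ler0n.
Qed.

Lemma le_markov n N k : (n <= N)%N -> markov n k <= markov N k.
Proof.
move=> le_nN; have [/markov_eq0 -> | le_kn] := ltnP n k; first exact: markov_ge0.
rewrite /markov ler_pM2r; last by rewrite invr_gt0; apply: prodr_gt0 => i _; rewrite ltr0n.
apply: ler_prod => i _; rewrite markov_factor_ge0 //=.
by rewrite lerB // -!natrX ler_nat leq_sqr.
Qed.

Lemma derivn_chebT_convex_bound (I : finType) (w : I -> R) (J : I -> nat) N k x :
  -1 <= x <= 1 -> (forall a, 0 <= w a) -> (forall a, J a <= N)%N ->
  \sum_a w a = 1 ->
  `|((\sum_a w a *: chebT (J a))^`(k)).[x]| <= markov N k.
Proof.
move=> x_in w_ge0 le_JN sum_w1.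
rewrite linear_sum horner_sum (le_trans (ler_norm_sum _ _ _)) //.
rewrite -[markov N k]mul1r -sum_w1 mulr_suml ler_sum // => a _.
rewrite linearZ /= hornerZ normrM ger0_norm // ler_wpM2l //.
exact: le_trans (derivn_chebT_bound _ _ _ x_in) (le_markov _ _ _ (le_JN a)).
Qed.

End ChebyshevBounds.

Lemma coef_exp_affine (R : comNzRingType) (a b : R) k i :
  ((a%:P + 'X * b%:P) ^+ k)`_i = a ^+ (k - i) * b ^+ i *+ 'C(k, i).
Proof.
elim: k i => [|k IH] [|i].
- by rewrite expr0 coef1 !expr0 mulr1.
- by rewrite expr0 coef1 /= bin0n mulr0n.
- rewrite exprSr mulrDr mulrA coefD !coefMC coefMX /= mul0r addr0 IH.
  by rewrite !subn0 !bin0 !mulr1n !expr0 !mulr1 -exprSr.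
rewrite exprSr mulrDr mulrA coefD !coefMC coefMX /= !IH binS mulrnDr.
have [lt_ik | le_ki] := ltnP i k.
  rewrite subSS; congr (_ + _); first by rewrite mulrnAl mulrAC -exprSr subnSK.
  by rewrite mulrnAl -mulrA -exprSr.
by rewrite (@bin_small k i.+1) ?ltnS // subSS [b ^+ i.+1]exprSr; ring.
Qed.

(* Both sides count the same multinomial (p + q)! / (j! (p-j)! (a-j)! (q-a+j)!). *)
Lemma bin_mul_swap p q a j : (j <= a)%N -> (j <= p)%N ->
  ('C(p + q, p) * ('C(q, a - j) * 'C(p, j))
   = 'C(p + q, a) * ('C(a, j) * 'C(p + q - a, p - j)))%N.
Proof.
move=> le_ja le_jp; move En : (p + q)%N => n.
have [lt_na | le_an] := ltnP n a.
  by rewrite (bin_small lt_na) mul0n (@bin_small q (a - j)) ?mul0n ?muln0 //; lia.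
have [lt_q | le_q] := ltnP q (a - j).
  by rewrite (bin_small lt_q) (@bin_small (n - a) (p - j)) ?mul0n ?muln0 //; lia.
set K := (j`! * (p - j)`! * ((a - j)`! * (q - (a - j))`!))%N.
have K_gt0 : (0 < K)%N by rewrite !muln_gt0 !fact_gt0.
apply/eqP; rewrite -(eqn_pmul2r K_gt0); apply/eqP.
have le_pn : (p <= n)%N by lia.
have le_pj : (p - j <= n - a)%N by lia.
have f1 := bin_fact le_jp; have f2 := bin_fact le_q; have f3 := bin_fact le_ja.
have f4 := bin_fact le_pj; have f5 := bin_fact le_an; have f6 := bin_fact le_pn.
rewrite (_ : n - a - (p - j) = q - (a - j))%N in f4; last by lia.
rewrite (_ : n - p = q)%N in f6; last by lia.
transitivity n`!; first by rewrite -f6 -f1 -f2 /K; ring.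
by rewrite -f5 -f3 -f4 /K; ring.
Qed.

Section ZernikeWeights.
Context {R : comNzRingType}.

Definition zweights (p q : nat) : {poly R} :=
  \sum_(s < p.+1) ('C(q, s) * 'C(p, s))%:R *:
     (('X + 1) ^+ (p + q - s.*2) * ('X - 1) ^+ s.*2).

Definition kraw (p q a : nat) : R :=
  \sum_(j < p.+1) ('C(a, j) * 'C(p + q - a, p - j))%:R * (-1) ^+ (p - j).

Definition kraw_dual (p q a : nat) : R :=
  \sum_(i < a.+1) ('C(q, i) * 'C(p, a - i))%:R * (-1) ^+ (p - (a - i)).

(* [zweights p q] is the coefficient of Y^p in A^q B^p, where A = (x + 1) + Y (x - 1)
   and B = (x - 1) + Y (x + 1); exchanging x and Y factors its coefficients. *)
Let x : {poly R} := 'X.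
Let A : {poly {poly R}} := (x + 1)%:P + 'X * (x - 1)%:P.
Let B : {poly {poly R}} := (x - 1)%:P + 'X * (x + 1)%:P.
Let A' : {poly {poly R}} := (1 - x)%:P + 'X * (1 + x)%:P.
Let B' : {poly {poly R}} := (x - 1)%:P + 'X * (1 + x)%:P.

Lemma coef_genY p q : (A ^+ q * B ^+ p)`_p = zweights p q.
Proof.
rewrite coefM /zweights; apply: eq_bigr => [[j lt_jp]] _ /=.
rewrite !coef_exp_affine subKn // bin_sub //.
have [lt_qj | le_jq] := ltnP q j.
  by rewrite (bin_small lt_qj) mul0n scale0r mulr0n mul0r.
rewrite (_ : p + q - j.*2 = (q - j) + (p - j))%N; last by rewrite -addnn; lia.
by rewrite -addnn !exprD -mul_polyC rmorph_nat natrM; ring.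
Qed.

Lemma swapXY_gen p q : swapXY (A ^+ q * B ^+ p) = A' ^+ q * B' ^+ p.
Proof.
have swapA : swapXY A = A'.
  rewrite /A /A' rmorphD rmorphM /= !swapXY_polyC swapXY_X /x.
  by rewrite rmorphD rmorphB /= map_polyX rmorph1 !rmorphB !rmorphD /= !polyC1; ring.
have swapB : swapXY B = B'.
  rewrite /B /B' rmorphD rmorphM /= !swapXY_polyC swapXY_X /x.
  by rewrite !(rmorphB, rmorphD) /= ?map_polyX ?rmorph1 ?polyC1 /=; ring.
by rewrite rmorphM !rmorphXn /= swapA swapB.
Qed.

Lemma coef_swap_genY p q a :
  (A' ^+ q * B' ^+ p)`_a = (kraw_dual p q a)%:P * ((1 + x) ^+ a * (1 - x) ^+ (p + q - a)).
Proof.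
rewrite coefM /kraw_dual rmorph_sum mulr_suml; apply: eq_bigr => [[i lt_ia]] _ /=.
rewrite !coef_exp_affine.
have [lt_qi | le_iq] := ltnP q i.
  by rewrite (bin_small lt_qi) mul0n mulr0n mul0r mul0r polyC0 mul0r.
have [lt_p | le_p] := ltnP p (a - i).
  by rewrite (bin_small lt_p) muln0 mulr0n mulr0 mul0r polyC0 mul0r.
rewrite (_ : p + q - a = (q - i) + (p - (a - i)))%N; last by lia.
have -> : (1 + x) ^+ a = (1 + x) ^+ i * (1 + x) ^+ (a - i).
  by rewrite -exprD subnKC // -ltnS.
rewrite exprD -[x - 1]opprB.
rewrite [(- (1 - x)) ^+ _]exprNn polyCM polyC_natr polyC_exp polyCN polyC1 natrM.
by rewrite -[_ *+ 'C(q, i)]mulr_natr -[_ *+ 'C(p, a - i)]mulr_natr; ring.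
Qed.

Lemma coef_kraw p q a : ((1 + x) ^+ a * (1 - x) ^+ (p + q - a))`_p = kraw p q a.
Proof.
rewrite coefM /kraw; apply: eq_bigr => [[j lt_jp]] _ /=.
rewrite (_ : 1 + x = 1%:P + 'X * 1%:P); last by rewrite polyC1 mulr1.
rewrite (_ : 1 - x = 1%:P + 'X * (-1)%:P); last by rewrite polyC1 polyCN mulrN1.
by rewrite !coef_exp_affine !expr1n !mul1r natrM; ring.
Qed.

Lemma coef_zweights p q a : (zweights p q)`_a = kraw_dual p q a * kraw p q a.
Proof.
by rewrite -coef_genY -coef_swapXY swapXY_gen coef_swap_genY coefCM coef_kraw.
Qed.

Lemma kraw_symmetry p q a :
  ('C(p + q, p))%:R * kraw_dual p q a = ('C(p + q, a))%:R * kraw p q a :> R.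
Proof.
pose t j := ('C(q, a - j) * 'C(p, j))%:R * (-1) ^+ (p - j) : R.
pose u j := ('C(a, j) * 'C(p + q - a, p - j))%:R * (-1) ^+ (p - j) : R.
have -> : kraw_dual p q a = \sum_(j < (a + p).+1 | (j < a.+1)%N) t j.
  rewrite -(big_ord_widen _ t) ?ltnS ?leq_addr //.
  rewrite /kraw_dual (reindex_inj rev_ord_inj) /=; apply: eq_bigr => [[j lt_ja]] _ /=.
  by rewrite /t subSS subKn // -ltnS.
have -> : kraw p q a = \sum_(j < (a + p).+1 | (j < p.+1)%N) u j.
  by rewrite -(big_ord_widen _ u) ?ltnS ?leq_addl.
rewrite !mulr_sumr big_mkcond [RHS]big_mkcond; apply: eq_bigr => [[j _]] _ /=; rewrite !ltnS.
have [le_ja | lt_aj] := leqP j a; have [le_jp | lt_pj] := leqP j p.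
- by rewrite /t /u !mulrA -!natrM bin_mul_swap.
- by rewrite /t (bin_small lt_pj) muln0 mul0r !mulr0.
- by rewrite /u (bin_small lt_aj) mul0n mul0r !mulr0.
- by [].
Qed.

Lemma horner_zweights1 p q : (zweights p q).[1] = 2 ^+ (p + q).
Proof.
rewrite /zweights horner_sum big_ord_recl big1 ?addr0.
  by rewrite !bin0 muln1 subn0 mulr1 scale1r !hornerE.
move=> i _; rewrite hornerZ hornerM [(('X - 1) ^+ _).[1]]horner_exp /=.
by rewrite hornerD hornerN hornerX hornerC subrr exprS mul0r !mulr0.
Qed.

End ZernikeWeights.

Section ZernikeBound.
Variable R : realFieldType.

Lemma zweights_coef_ge0 p q a : 0 <= (zweights p q)`_a :> R.
Proof.
have C_gt0 : (0 : R) < ('C(p + q, p))%:R by rewrite ltr0n bin_gt0 leq_addr.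
rewrite coef_zweights -(pmulr_rge0 _ C_gt0) mulrA kraw_symmetry -mulrA -expr2.
by rewrite mulr_ge0 ?ler0n ?sqr_ge0.
Qed.

Lemma size_zweights p q : (size (zweights p q : {poly R}) <= (p + q).+1)%N.
Proof.
apply/leq_sizeP => a lt_a; rewrite coef_zweights.
have := kraw_symmetry (R := R) p q a; rewrite (bin_small lt_a) mul0r => /eqP.
by rewrite mulf_eq0 pnatr_eq0 eqn0Ngt bin_gt0 leq_addr /= => /eqP ->; rewrite mul0r.
Qed.

Lemma jacobi0_comp M p :
  jacobi R 0 M p \Po (2%:P * 'X ^+ 2 - 1) =
  \sum_(s < p.+1) ('C(p, s) * 'C(p + M, s))%:R *: (('X ^+ 2 - 1) ^+ s * ('X ^+ 2) ^+ (p - s)).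
Proof.
set Q : {poly R} := 2%:P * 'X ^+ 2 - 1.
have compXn P n : P ^+ n \Po Q = (P \Po Q) ^+ n by rewrite rmorphXn.
have compXsub1 : ('X - 1) \Po Q = ('X ^+ 2 - 1) *+ 2.
  by rewrite comp_polyB comp_polyX comp_polyC /Q polyC_natr; ring.
have compXadd1 : ('X + 1) \Po Q = 'X ^+ 2 *+ 2.
  by rewrite comp_polyD comp_polyX comp_polyC /Q polyC_natr; ring.
rewrite /jacobi linear_sum; apply: eq_bigr => [[s /= lt_sp]] _.
have le_sp : (s <= p)%N by rewrite -ltnS.
rewrite comp_polyZ comp_polyM !compXn compXsub1 compXadd1 addn0 (bin_sub le_sp).
rewrite [_ ^+ s]exprMn_n [_ ^+ (p - s)]exprMn_n [_ *+ 2 ^ s * _]mulrnAl mulrnAr.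
rewrite -mulrnA -expnD (subnK le_sp) -scalerMnr scalerMnl -[_ *+ 2 ^ p]mulr_natr natrX.
by rewrite mulfVK // expf_neq0 // pnatr_eq0.
Qed.

Lemma cheb_fold_zweights M p N : N = (M + p.*2)%N ->
  cheb_fold N (zweights p (p + M))
    = ('X ^+ M * (jacobi R 0 M p \Po (2%:P * 'X ^+ 2 - 1))) *+ 2 ^ N.
Proof.
move=> NE; rewrite jacobi0_comp /zweights linear_sum mulr_sumr -sumrMnl.
apply: eq_bigr => [[s /= lt_sp]] _; rewrite linearZ /=.
have le_sp : (s <= p)%N by rewrite -ltnS.
set a := (p + (p + M) - s.*2)%N.
have NE' : N = (a + s.*2)%N by rewrite NE /a -!addnn; lia.
rewrite {1}NE' cheb_fold_pow [_ ^+ a]exprMn_n [_ ^+ s]exprMn_n.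
have -> : 'X ^+ a = 'X ^+ M * ('X ^+ 2) ^+ (p - s) :> {poly R}.
  by rewrite -exprM -exprD /a -!addnn; congr (_ ^+ _); lia.
rewrite [_ *+ 2 ^ a * _]mulrnAl mulrnAr -mulrnA -scalerAr scalerMnr.
rewrite NE' expnD -mul2n expnM; congr (_ *: _); first by rewrite mulnC.
by rewrite [(4 ^ s * 2 ^ a)%N]mulnC -mulrA [(_ - 1) ^+ s * _]mulrC.
Qed.

Lemma zernike_chebT_expansion M p N : N = (M + p.*2)%N ->
  'X ^+ M * (jacobi R 0 M p \Po (2%:P * 'X ^+ 2 - 1)) =
  \sum_(a < N.+1) (2 ^- N * (zweights p (p + M))`_a) *: chebT (absz (a.*2%:Z - N%:Z)).
Proof.
move=> NE; have two_nz : 2 ^+ N != 0 :> R by rewrite expf_neq0 // pnatr_eq0.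
have := cheb_fold_zweights _ _ _ NE; rewrite -scaler_nat natrX => fold.
rewrite (_ : _ * _ = 2 ^- N *: cheb_fold N (zweights p (p + M))); last first.
  by rewrite fold scalerA mulVf // scale1r.
rewrite (cheb_fold_widen N _ N.+1); last first.
  by rewrite (leq_trans (size_zweights _ _)) // NE -addnn; lia.
by rewrite scaler_sumr; apply: eq_bigr => a _; rewrite scalerA.
Qed.

Lemma derivn_zernike_bound M p k (x : R) : -1 <= x <= 1 ->
  `|(('X ^+ M * (jacobi R 0 M p \Po (2%:P * 'X ^+ 2 - 1)))^`(k)).[x]|
    <= markov R (M + p.*2) k.
Proof.
move=> x_in; set N := (M + p.*2)%N.
have NE : (p + (p + M))%N = N by rewrite /N -addnn; lia.
rewrite (zernike_chebT_expansion _ _ _ (erefl N)).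
apply: derivn_chebT_convex_bound => // [a|[a /= lt_a]|].
- by rewrite mulr_ge0 ?invr_ge0 ?exprn_ge0 ?ler0n ?zweights_coef_ge0.
- by lia.
rewrite -mulr_sumr (_ : \sum_(a < N.+1) _ = (zweights p (p + M)).[1]).
  by rewrite horner_zweights1 NE mulVf // expf_neq0 // pnatr_eq0.
rewrite (@horner_coef_wide _ N.+1) -?NE ?size_zweights //.
by apply: eq_bigr => a _; rewrite expr1n mulr1.
Qed.

End ZernikeBound.

Lemma pochhammer_half (R : numFieldType) k :
  2 ^+ k * pochhammer (2^-1 : R) k = \prod_(i < k) (i.*2.+1)%:R.
Proof.
elim: k => [|k IH]; first by rewrite /pochhammer !big_ord0 mulr1.
rewrite /pochhammer in IH *; rewrite !big_ord_recr /= -IH exprS.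
have -> : (k.*2.+1)%:R = 2 * (2^-1 + k%:R) :> R.
  by rewrite mulrDr mulfV ?pnatr_eq0 // -natrM mul2n -addn1 natrD addrC.
ring.
Qed.

Theorem mainTheorem1 (R : realFieldType) (n m : int) (k : nat)
  (hnm : `|m| <= n) (heven : (2 %| n - `|m|)%Z) :
  forall r : R, 0 <= r <= 1 ->
    `|((zernikeR R n m)^`(k)).[r]|
      <= (\prod_(i < k) (n%:~R ^+ 2 - (i%:R : R) ^+ 2))
           / (2 ^+ k * pochhammer (2^-1 : R) k).
Proof.
move=> r /andP[r_ge0 r_le1].
have r_in : -1 <= r <= 1 by apply/andP; split; lra.
set N := absz n; set M := absz m.
have nE : n = N%:Z by rewrite /N gez0_abs // (le_trans (normr_ge0 m)).
have mE : `|m| = M%:Z by rewrite /M abszE.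
have le_MN : (M <= N)%N by rewrite -lez_nat -mE -nE.
have dvd2 : (2 %| N - M)%N by move: heven; rewrite dvdzE nE mE subzn.
have NE : N = (M + ((N - M) %/ 2).*2)%N by rewrite -muln2 divnK //; lia.
have -> : zernikeR R n m = 'X ^+ M * (jacobi R 0 M ((N - M) %/ 2) \Po (2%:P * 'X ^+ 2 - 1)).
  by rewrite /zernikeR -/M nE subzn.
apply: le_trans (derivn_zernike_bound _ _ _ _ _ r_in) _; rewrite -NE.
by rewrite pochhammer_half /markov nE.
Qed.
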